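(* Let $f_1,\dots,f_n:\mathbb{R}^d\to\mathbb{R}$ satisfy Assumption A1 and let $F=(f_1,\dots,f_n)$. Then $R\le\sqrt{\kappa}\,r$, where $R:=\mathrm{diam}(\mathrm{Pareto}(F))=\sup\{\|x-x'\|_2:x,x'\in\mathrm{Pareto}(F)\}$.
   Context: Assumption A1: each $f_i$ is twice differentiable with $\mu\mathbf{I}\preceq\nabla^2 f_i(x)\preceq L\mathbf{I}$ for all $x$, $0<\mu\le L$; $\kappa:=L/\mu$; and $r:=\max_{i,j\in[n]}\|\operatorname{argmin} f_i-\operatorname{argmin} f_j\|_2$. A point $x$ is Pareto optimal if for all $x'$, $f_i(x')<f_i(x)$ for some $i$ implies $f_j(x')>f_j(x)$ for some $j$; $\mathrm{Pareto}(F)$ is the set of Pareto optimal points. *)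

From HB Require Import structures.
From mathcomp Require Import all_boot all_order all_algebra.
From mathcomp Require Import all_classical all_reals all_analysis.
Set Implicit Arguments. Unset Strict Implicit. Unset Printing Implicit Defensive.
Import Order.TTheory GRing.Theory Num.Theory.
Import numFieldNormedType.Exports.
Local Open Scope ring_scope.

Section Defs.
Variables (R : realType) (d : nat).

Definition dotv (u v : 'rV[R]_d) : R := \sum_(i < d) u 0 i * v 0 i.
Definition norm2 (u : 'rV[R]_d) : R := Num.sqrt (dotv u u).

Definition basisv (i : 'I_d) : 'rV[R]_d := \row_(j < d) (i == j)%:R.

Definition grad (f : 'rV[R]_d -> R) (x : 'rV[R]_d) : 'rV[R]_d :=
  \row_(i < d) ('d f x (basisv i)).

Definition A1_fun (mu L : R) (f : 'rV[R]_d -> R) : Prop :=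
  (forall x, differentiable f x) /\
  (forall x, differentiable (grad f) x) /\
  (forall x v, mu * dotv v v <= dotv ('d (grad f) x v) v /\
               dotv ('d (grad f) x v) v <= L * dotv v v).

Definition pareto_opt (n : nat) (F : 'I_n -> 'rV[R]_d -> R) (x : 'rV[R]_d) : Prop :=
  forall x', (exists i, F i x' < F i x) -> (exists j, F j x < F j x').

Definition is_argmin (f : 'rV[R]_d -> R) (z : 'rV[R]_d) : Prop :=
  forall x, f z <= f x.

End Defs.

From HB Require Import structures.
From mathcomp Require Import all_boot all_order all_algebra.
From mathcomp Require Import all_classical all_reals all_analysis.
From mathcomp Require Import ring lra.
Import Order.TTheory GRing.Theory Num.Theory.
Import numFieldNormedType.Exports.
Local Open Scope ring_scope.

(* At a Pareto point x no direction decreases every f_i, so by Gordan's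
   alternative some convex combination sum_i w_i grad f_i(x) vanishes and x
   minimises the mu-strongly convex function sum_i w_i f_i.  Comparing its
   values at x and at the weighted mean m = sum_i w_i x_i* through the
   quadratic bounds around each minimiser x_i* gives
   2 mu |x - m|^2 <= (L - mu) V  with  V = sum_i w_i |m - x_i*|^2.
   For two Pareto points, |m - m'|^2 + V + V' is the (w x w')-average of
   |x_i* - x_j*|^2, hence at most r^2, and Young's inequality with weights mu
   and L - mu combines the two bounds into mu |x - x'|^2 <= L r^2. *)

Section InnerProduct.
Context {R : realType} {d : nat}.
Implicit Types u v w : 'rV[R]_d.

Lemma dotvC u v : dotv u v = dotv v u.
Proof. by apply: eq_bigr => i _; rewrite mulrC. Qed.

Lemma dotvDl u v w : dotv (u + v) w = dotv u w + dotv v w.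
Proof. by rewrite /dotv -big_split; apply: eq_bigr => i _; rewrite mxE mulrDl. Qed.

Lemma dotvZl a u v : dotv (a *: u) v = a * dotv u v.
Proof. by rewrite /dotv mulr_sumr; apply: eq_bigr => i _; rewrite mxE mulrA. Qed.

Lemma dotvNl u v : dotv (- u) v = - dotv u v.
Proof. by rewrite -scaleN1r dotvZl mulN1r. Qed.

Lemma dotvDr u v w : dotv u (v + w) = dotv u v + dotv u w.
Proof. by rewrite dotvC dotvDl !(dotvC u). Qed.

Lemma dotvZr a u v : dotv u (a *: v) = a * dotv u v.
Proof. by rewrite dotvC dotvZl dotvC. Qed.

Lemma dotvNr u v : dotv u (- v) = - dotv u v.
Proof. by rewrite dotvC dotvNl dotvC. Qed.

Lemma dotv0l v : dotv 0 v = 0.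
Proof. by rewrite -(scale0r 0) dotvZl mul0r. Qed.

Lemma dotv_suml n (u : 'I_n -> 'rV[R]_d) v :
  dotv (\sum_(i < n) u i) v = \sum_(i < n) dotv (u i) v.
Proof.
by elim/big_ind2: _ => [|a b c e <- <-|//]; rewrite ?dotv0l ?dotvDl.
Qed.

Lemma dotv_ge0 u : 0 <= dotv u u.
Proof. by apply: sumr_ge0 => i _; rewrite -expr2 sqr_ge0. Qed.

Lemma dotv_eq0 u : dotv u u = 0 -> u = 0.
Proof.
move=> /eqP; rewrite psumr_eq0 => [/allP u0|i _]; last by rewrite -expr2 sqr_ge0.
apply/rowP => i; rewrite mxE; have := u0 i (mem_index_enum _).
by rewrite /= mulf_eq0 orbb => /eqP.
Qed.

Lemma dotv_sqrD u v : dotv (u + v) (u + v) = dotv u u + 2 * dotv u v + dotv v v.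
Proof. by rewrite dotvDl !dotvDr (dotvC v u); ring. Qed.

Lemma dotv_sqrN u : dotv (- u) (- u) = dotv u u.
Proof. by rewrite dotvNl dotvNr opprK. Qed.

(* Young's inequality with weights [p] and [q]: the difference of the two
   sides is [dotv (q *: u - p *: v) (q *: u - p *: v)]. *)
Lemma dotv_sqrD_le p q u v :
  p * q * dotv (u + v) (u + v) <= (p + q) * (q * dotv u u + p * dotv v v).
Proof.
have := dotv_ge0 (q *: u - p *: v).
by rewrite !dotv_sqrD dotv_sqrN dotvNr !dotvZl !dotvZr; nra.
Qed.

Lemma dotv_sqr_segment_lt {p q : 'rV[R]_d} :
  0 < dotv p p -> dotv p q <= 0 ->
  exists2 t, 0 <= t <= 1 &
    dotv ((1 - t) *: p + t *: q) ((1 - t) *: p + t *: q) < dotv p p.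
Proof.
set P := dotv p p; set G := dotv q q => P0 obtuse.
have G0 : 0 <= G := dotv_ge0 q.
have PG0 : 0 < P + G by lra.
pose t := P / (P + G).
have t0 : 0 < t by rewrite divr_gt0.
have t1 : t <= 1 by rewrite ler_pdivrMr // mul1r lerDl.
have tPG : t * (P + G) = P by rewrite divfK // gt_eqF.
exists t; first by rewrite t1 ltW.
rewrite dotv_sqrD !dotvZl !dotvZr -/P -/G.
have : t * (1 - t) * dotv p q <= 0.
  by apply: mulr_ge0_le0 => //; apply: mulr_ge0; lra.
have : t * t * (P + G) = t * P by rewrite -mulrA tPG.
have := mulr_gt0 t0 P0.
by lra.
Qed.

End InnerProduct.

Section WeightedMean.
Context {R : realType} {d n : nat}.
Implicit Types (w : 'I_n -> R) (X : 'I_n -> 'rV[R]_d) (y : 'rV[R]_d).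

Definition convex_weights w := (forall i, 0 <= w i) /\ \sum_(i < n) w i = 1.

Definition wmean w X : 'rV[R]_d := \sum_(i < n) w i *: X i.

Definition wsqdist w X y : R := \sum_(i < n) w i * dotv (y - X i) (y - X i).

Lemma convex_sum_le {w} {a : 'I_n -> R} {c} :
  convex_weights w -> (forall i, a i <= c) -> \sum_(i < n) w i * a i <= c.
Proof.
move=> [w0 w1] ac; rewrite -[c]mul1r -w1 mulr_suml.
by apply: ler_sum => i _; rewrite ler_wpM2l.
Qed.

Lemma wsqdist_ge0 w X y : convex_weights w -> 0 <= wsqdist w X y.
Proof. by move=> [w0 _]; apply: sumr_ge0 => i _; rewrite mulr_ge0 ?dotv_ge0. Qed.

Lemma dotv_wmeanl w X y : dotv (wmean w X) y = \sum_(i < n) w i * dotv (X i) y.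
Proof. by rewrite dotv_suml; apply: eq_bigr => i _; rewrite dotvZl. Qed.

Lemma wmean_centered w X : \sum_(i < n) w i = 1 ->
  wmean w (fun i => wmean w X - X i) = 0.
Proof.
move=> w1; rewrite /wmean (eq_bigr _ (fun i _ => scalerBr _ _ _)).
by rewrite sumrB -scaler_suml w1 scale1r subrr.
Qed.

Lemma wsqdist_wmean w X y : \sum_(i < n) w i = 1 ->
  wsqdist w X y =
  dotv (y - wmean w X) (y - wmean w X) + wsqdist w X (wmean w X).
Proof.
move=> w1; set m := wmean w X.
have split_i i : w i * dotv (y - X i) (y - X i) =
    w i * dotv (y - m) (y - m) + 2 * (w i * dotv (m - X i) (y - m))
    + w i * dotv (m - X i) (m - X i).
  have -> : y - X i = (y - m) + (m - X i) by rewrite addrA subrK.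
  by rewrite dotv_sqrD (dotvC (y - m)); ring.
rewrite /wsqdist (eq_bigr _ (fun i _ => split_i i)) !big_split /=.
by rewrite -mulr_suml w1 mul1r -mulr_sumr -dotv_wmeanl wmean_centered // dotv0l mulr0 addr0.
Qed.

Lemma wsqdist_cross w w' X :
  \sum_(i < n) w i = 1 -> \sum_(i < n) w' i = 1 ->
  \sum_(i < n) w i * wsqdist w' X (X i) =
  dotv (wmean w X - wmean w' X) (wmean w X - wmean w' X)
  + wsqdist w X (wmean w X) + wsqdist w' X (wmean w' X).
Proof.
move=> w1 w1'.
under eq_bigr => i _ do rewrite (wsqdist_wmean w' X (X i) w1') mulrDr -dotv_sqrN opprB.
rewrite big_split /= -mulr_suml w1 mul1r.
by rewrite -/(wsqdist w X (wmean w' X)) wsqdist_wmean // -dotv_sqrN opprB.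
Qed.

End WeightedMean.

Section SecondOrderBounds.
Context {R : realType}.

Lemma le_of_derive_ge0 {h dh : R -> R} {a b : R} :
  (forall s : R, is_derive s 1 h (dh s)) -> (forall s, a <= s <= b -> 0 <= dh s) ->
  a <= b -> h a <= h b.
Proof.
move=> hd dh0 ab; apply: (@ger0_derive1_ndecr R h a b) => //.
- move=> s; rewrite in_itv /= => /andP[a_s sb].
  by rewrite derive1E derive_val dh0 // !ltW.
- by apply: derivable_within_continuous => s _.
Qed.

Lemma is_derive_quadratic (b c : R) {h dh : R -> R} {s : R} :
  is_derive s 1 h (dh s) ->
  is_derive s 1 (fun t => h t - b * t - c * t ^+ 2) (dh s - b - c * (2 * s)).
Proof.
move=> hd.
have D := is_deriveB (is_deriveB hd (is_deriveZ b (is_derive_id s 1)))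
                     (is_deriveZ c (is_deriveX 2 (is_derive_id s 1))).
apply: (is_derive_eq D).
by rewrite /= expr1 ![_%:A]mulr1.
Qed.

Lemma second_order_lb {g g' g'' : R -> R} {m : R} :
  (forall s : R, is_derive s 1 g (g' s)) -> (forall s : R, is_derive s 1 g' (g'' s)) ->
  (forall s, 0 <= s <= 1 -> m <= g'' s) -> m / 2 <= g 1 - g 0 - g' 0.
Proof.
move=> dg dg' m_le.
have slope s : 0 <= s <= 1 -> g' 0 + m * s <= g' s.
  move=> /andP[s0 s1].
  have := le_of_derive_ge0 (fun t => is_derive_quadratic m 0 (dg' t)) _ s0.
  rewrite !mul0r !subr0 mulr0 subr0 -lerBrDr; apply => t /andP[t0 ts].
  by rewrite mul0r subr0 subr_ge0 m_le // t0 (le_trans ts).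
have mono : g 0 <= g 1 - g' 0 - m / 2.
  have := le_of_derive_ge0 (fun t => is_derive_quadratic (g' 0) (m / 2) (dg t)) _ ler01.
  rewrite !mulr0 expr0n /= mulr0 !subr0 mulr1 expr1n mulr1; apply=> t t01.
  have -> : m / 2 * (2 * t) = m * t by field.
  by have := slope t t01; lra.
by lra.
Qed.

Lemma second_order_ub {g g' g'' : R -> R} {M : R} :
  (forall s : R, is_derive s 1 g (g' s)) -> (forall s : R, is_derive s 1 g' (g'' s)) ->
  (forall s, 0 <= s <= 1 -> g'' s <= M) -> g 1 - g 0 - g' 0 <= M / 2.
Proof.
move=> dg dg' le_M.
have le_NM s : 0 <= s <= 1 -> - M <= - g'' s by move=> s01; rewrite lerN2 le_M.
have := second_order_lb (fun s => is_deriveN (dg s)) (fun s => is_deriveN (dg' s)) le_NM.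
by rewrite !fctE mulNr; lra.
Qed.

End SecondOrderBounds.

Section Gradient.
Context {R : realType} {d : nat}.
Implicit Types (f : 'rV[R]_d -> R) (x v w : 'rV[R]_d).

Lemma row_basisv_sum v : v = \sum_(i < d) v 0 i *: basisv R i.
Proof.
apply/rowP => j; rewrite summxE (bigD1 j) //= big1 => [|i /negbTE ij].
  by rewrite !mxE eqxx mulr1 addr0.
by rewrite !mxE ij mulr0.
Qed.

Lemma diff_grad f x v : 'd f x v = dotv (grad f x) v.
Proof.
rewrite {1}(row_basisv_sum v) linear_sum; apply: eq_bigr => i _.
by rewrite linearZ mxE mulrC.
Qed.

Lemma is_derive_dotv (G : 'rV[R]_d -> 'rV[R]_d) x v w : derivable G x v ->
  is_derive x v (fun y => dotv (G y) w) (dotv ('D_v G x) w).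
Proof.
move=> dG.
have -> : (fun y => dotv (G y) w) = \sum_(i < d) w 0 i *: (fun y => G y 0 i).
  by apply/funext => y; rewrite fct_sumE; apply: eq_bigr => i _; rewrite /= mulrC.
rewrite /dotv (eq_bigr (fun i => w 0 i *: 'D_v G x 0 i)) => [|i _]; last first.
  exact: mulrC.
apply: is_derive_sum => i; apply: is_deriveZ; split.
  exact: (derivable_mxP _ _ _).1 dG 0 i.
by rewrite derive_mx // mxE.
Qed.

Lemma is_derive_line {W : normedModType R} (F : 'rV[R]_d -> W) x v t df :
  is_derive (t *: v + x) v F df -> is_derive t 1 (fun s : R => F (s *: v + x)) df.
Proof.
move=> [dF <-].
have quotE : (fun h : R => h^-1 *: (((fun s : R => F (s *: v + x)) \o shift t) (h *: 1)
                 - F (t *: v + x)))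
           = (fun h : R => h^-1 *: ((F \o shift (t *: v + x)) (h *: v) - F (t *: v + x))).
  by apply/funext => h /=; rewrite /shift /= [_%:A]mulr1 scalerDl addrA.
by split; rewrite /derivable /derive quotE.
Qed.

End Gradient.

Definition strongly_convex_smooth {R : realType} {d : nat} (mu L : R)
    (f : 'rV[R]_d -> R) := forall x y,
  mu / 2 * dotv (y - x) (y - x) <= f y - f x - dotv (grad f x) (y - x)
  <= L / 2 * dotv (y - x) (y - x).

Lemma A1_strongly_convex_smooth {R : realType} {d : nat} {mu L : R}
    {f : 'rV[R]_d -> R} :
  A1_fun mu L f -> strongly_convex_smooth mu L f.
Proof.
move=> [df [dgrad hess]] x y; set v := y - x.
have dg (s : R) : is_derive s 1 (fun s => f (s *: v + x)) (dotv (grad f (s *: v + x)) v).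
  by apply: is_derive_line; rewrite -diff_grad -deriveE //; apply/derivableP/diff_derivable.
have dg' (s : R) : is_derive s 1 (fun s => dotv (grad f (s *: v + x)) v)
                           (dotv ('d (grad f) (s *: v + x) v) v).
  apply: (is_derive_line (fun y => dotv (grad f y) v)).
  by rewrite -deriveE //; apply: is_derive_dotv; exact: diff_derivable.
have := second_order_lb dg dg' (m := mu * dotv v v) (fun s _ => (hess _ v).1).
have := second_order_ub dg dg' (M := L * dotv v v) (fun s _ => (hess _ v).2).
rewrite scale1r scale0r add0r subrK (mulrAC mu) (mulrAC L) => ub lb.
by rewrite lb ub.
Qed.

Section StronglyConvexSmooth.
Context {R : realType} {d : nat} {mu L : R} {f : 'rV[R]_d -> R}.
Hypotheses (hf : strongly_convex_smooth mu L f) (L0 : 0 < L).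
Implicit Types (x y z v : 'rV[R]_d).

Lemma descent_step x v t : 0 < t -> t * (L * dotv v v) < - 2 * dotv (grad f x) v ->
  f (x + t *: v) < f x.
Proof.
move=> t0 small; have /andP[_] := hf x (x + t *: v).
rewrite [x + _ - x]addrC addKr dotvZl !dotvZr => up.
have : t * (L / 2 * (t * dotv v v)) < - (t * dotv (grad f x) v) by nra.
by lra.
Qed.

Lemma grad_argmin {z} : is_argmin f z -> grad f z = 0.
Proof.
move=> zmin; apply: dotv_eq0; apply/eqP; rewrite eq_le dotv_ge0 andbT.
rewrite leNgt; apply/negP => G0.
have := zmin (z + L^-1 *: - grad f z); rewrite leNgt => /negP; apply.
apply: descent_step; first by rewrite invr_gt0.
by rewrite dotv_sqrN dotvNr mulrA mulVf ?gt_eqF // mul1r; lra.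
Qed.

Lemma sqdist_argmin_le z x y : is_argmin f z ->
  mu * dotv (y - x) (y - x) + 2 * dotv (grad f x) (y - x) + mu * dotv (x - z) (x - z)
  <= L * dotv (y - z) (y - z).
Proof.
move=> zmin; have gz := grad_argmin zmin.
have /andP[lo_xy _] := hf x y.
have /andP[lo_zx _] := hf z x.
have /andP[_ up_zy] := hf z y.
rewrite gz !dotv0l !subr0 in lo_zx up_zy.
by lra.
Qed.

End StronglyConvexSmooth.

Section Simplex.
Context {R : realType} {n : nat}.
Local Open Scope classical_set_scope.

Definition simplex := [set w : 'rV[R]_n | convex_weights (w 0)].

Lemma basisv_simplex i : simplex (basisv R i).
Proof.
split=> [j|]; first by rewrite mxE ler0n.
rewrite (bigD1 i) //= big1 => [|j /negbTE ji]; first by rewrite mxE eqxx addr0.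
by rewrite mxE eq_sym ji.
Qed.

Lemma simplex_convex w w' t : simplex w -> simplex w' -> 0 <= t <= 1 ->
  simplex ((1 - t) *: w + t *: w').
Proof.
move=> [w0 w1] [w0' w1'] /andP[t0 t1]; split=> [j|].
  by rewrite !mxE addr_ge0 // mulr_ge0 // subr_ge0.
rewrite (eq_bigr (fun j => (1 - t) * w 0 j + t * w' 0 j)) => [|j _]; last first.
  by rewrite !mxE.
by rewrite big_split /= -!mulr_sumr w1 w1' !mulr1 subrK.
Qed.

Lemma simplex_closed : closed simplex.
Proof.
have -> : simplex = \bigcap_(i in setT) [set w : 'rV[R]_n | 0 <= w 0 i]
    `&` (fun w : 'rV[R]_n => \sum_(i < n) w 0 i) @^-1` [set 1].
  apply/seteqP; split => w [w0 w1]; split => // i; first by move=> _; exact: w0.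
  exact: w0.
apply: closedI.
  apply: closed_bigI => i _.
  apply: (@preimage_closed _ _ (fun w : 'rV[R]_n => w 0 i) [set x | 0 <= x]).
    by move=> w _; exact: coord_continuous.
  exact: closed_ge.
apply: preimage_closed; last exact: closed_eq.
move=> w _; apply: differentiable_continuous.
rewrite (_ : (fun w : 'rV[R]_n => _) = \sum_(i < n) (fun w : 'rV[R]_n => w 0 i)).
  by apply: differentiable_sum => i; exact: differentiable_coord.
by rewrite fct_sumE.
Qed.

Lemma simplex_compact : compact simplex.
Proof.
apply: (@subclosed_compact _ _ [set v : 'rV[R]_n | forall i, `[0, 1]%classic (v ord0 i)]).
- exact: simplex_closed.
- by apply: (@rV_compact R n (fun=> `[0, 1]%classic)) => i; exact: segment_compact.
- move=> w [w0 w1] i /=; rewrite in_itv /= w0 -w1 (bigD1 i) //= lerDl.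
  by apply: sumr_ge0 => j _.
Qed.

End Simplex.

Section Gordan.
Context {R : realType} {d n : nat} (g : 'I_n -> 'rV[R]_d).

Lemma wmean_row_comb (w w' : 'rV[R]_n) a b :
  wmean ((a *: w + b *: w') 0) g = a *: wmean (w 0) g + b *: wmean (w' 0) g.
Proof.
rewrite /wmean !scaler_sumr -big_split; apply: eq_bigr => i _.
by rewrite !mxE scalerDl !scalerA.
Qed.

Lemma wmean_basisv i : wmean (basisv R i 0) g = g i.
Proof.
rewrite /wmean (bigD1 i) //= big1 => [|j /negbTE ji]; first by rewrite mxE eqxx scale1r addr0.
by rewrite mxE eq_sym ji scale0r.
Qed.

Lemma continuous_sqr_wmean :
  continuous (fun w : 'rV[R]_n => dotv (wmean (w 0) g) (wmean (w 0) g)).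
Proof.
pose h k := \sum_(i < n) g i 0 k *: (fun w : 'rV[R]_n => w 0 i).
have -> : (fun w : 'rV[R]_n => dotv (wmean (w 0) g) (wmean (w 0) g))
          = \sum_(k < d) (h k * h k).
  apply/funext => w; rewrite /dotv fct_sumE; apply: eq_bigr => k _.
  have hE : h k w = wmean (w 0) g 0 k.
    by rewrite /h fct_sumE summxE; apply: eq_bigr => i _; rewrite !mxE mulrC.
  by rewrite -hE.
move=> w; apply: differentiable_continuous; apply: differentiable_sum => k.
by apply: differentiableM; apply: differentiable_sum => i;
  apply: differentiableZ; exact: differentiable_coord.
Qed.

(* The point of least norm in the convex hull of the [g i] must be 0. *)
Lemma gordan_alternative : (forall v, exists i, 0 <= dotv (g i) v) ->
  exists w, convex_weights w /\ wmean w g = 0.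
Proof.
move=> hg; have [i0 _] := hg 0.
have [w /set_mem Sw wmin] := EVT_min_rV (ex_intro _ _ (basisv_simplex i0))
  simplex_compact (continuous_subspaceT continuous_sqr_wmean).
exists (w 0); split => //.
apply: dotv_eq0; apply/eqP; rewrite eq_le dotv_ge0 andbT leNgt; apply/negP => P0.
have [i] := hg (- wmean (w 0) g); rewrite dotvNr oppr_ge0 dotvC => obtuse.
have [t t01] := dotv_sqr_segment_lt P0 obtuse.
apply/negP; rewrite -leNgt -wmean_basisv -wmean_row_comb.
by apply/wmin/mem_set/simplex_convex => //; exact: basisv_simplex.
Qed.

End Gordan.

Section Pareto.
Context {R : realType} {d n : nat} {mu L : R} {F : 'I_n -> 'rV[R]_d -> R}.
Hypotheses (L0 : 0 < L) (hF : forall i, strongly_convex_smooth mu L (F i)).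

Lemma pareto_no_common_descent (i0 : 'I_n) {x} : pareto_opt F x ->
  forall v, exists i, 0 <= dotv (grad (F i) x) v.
Proof.
move=> Px v; apply/not_existsP => descent.
pose c i := - dotv (grad (F i) x) v.
have c0 i : 0 < c i by rewrite oppr_gt0 ltNge; apply/negP; exact: descent.
have [j _ jmin] := @arg_minP _ R _ i0 xpredT c isT.
have N0 : 0 < L * dotv v v + 1 by rewrite ltr_wpDl ?mulr_ge0 ?dotv_ge0 ?ltW.
(* The [+ 1] spares a case split on [v = 0]. *)
pose t := c j / (L * dotv v v + 1).
have dec i : F i (x + t *: v) < F i x.
  apply: (descent_step (hF i)); first by rewrite divr_gt0.
  have : t * (L * dotv v v) < c j.
    by rewrite mulrAC ltr_pdivrMr // ltr_pM2l // ltrDl.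
  by have := jmin i isT; have := c0 i; rewrite /c; lra.
have [k] := Px _ (ex_intro _ i0 (dec i0)).
by rewrite ltNge (ltW (dec k)).
Qed.

Lemma pareto_stationary (i0 : 'I_n) {x} : pareto_opt F x ->
  exists w, convex_weights w /\ wmean w (fun i => grad (F i) x) = 0.
Proof. by move=> Px; apply: gordan_alternative; exact: pareto_no_common_descent. Qed.

Context {xstar : 'I_n -> 'rV[R]_d}.
Hypothesis hmin : forall i, is_argmin (F i) (xstar i).

Lemma pareto_wsqdist_le (i0 : 'I_n) {x} : pareto_opt F x ->
  exists w, convex_weights w /\ forall y,
    mu * dotv (y - x) (y - x) + mu * wsqdist w xstar x <= L * wsqdist w xstar y.
Proof.
move=> Px; have [w [[w0 w1] stat]] := pareto_stationary i0 Px.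
exists w; split => // y.
have := ler_sum (index_enum 'I_n) (P := xpredT)
  (fun i _ => ler_wpM2l (w0 i) (sqdist_argmin_le (hF i) L0 _ x y (hmin i))).
set D := dotv (y - x) (y - x).
have expand i : w i * (mu * D + 2 * dotv (grad (F i) x) (y - x)
                        + mu * dotv (x - xstar i) (x - xstar i))
  = mu * D * w i + 2 * (w i * dotv (grad (F i) x) (y - x))
    + mu * (w i * dotv (x - xstar i) (x - xstar i)) by ring.
rewrite (eq_bigr _ (fun i _ => expand i)) !big_split /= -!mulr_sumr w1 mulr1.
rewrite -dotv_wmeanl stat dotv0l mulr0 addr0.
by under eq_bigr do rewrite mulrCA; rewrite -mulr_sumr.
Qed.

Lemma pareto_near_wmean (i0 : 'I_n) {x} : pareto_opt F x ->
  exists w, convex_weights w /\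
    2 * mu * dotv (x - wmean w xstar) (x - wmean w xstar)
    <= (L - mu) * wsqdist w xstar (wmean w xstar).
Proof.
move=> Px; have [w [ww le_w]] := pareto_wsqdist_le i0 Px.
exists w; split => //; set m := wmean w xstar.
have := le_w m; rewrite (wsqdist_wmean w xstar x ww.2).
have -> : dotv (m - x) (m - x) = dotv (x - m) (x - m) by rewrite -dotv_sqrN opprB.
by lra.
Qed.

End Pareto.

Lemma sqdist_near_centers_le {R : realType} {d : nat} {mu L V V' : R}
    {x x' m m' : 'rV[R]_d} :
  0 < mu -> mu <= L -> 0 <= V -> 0 <= V' ->
  2 * mu * dotv (x - m) (x - m) <= (L - mu) * V ->
  2 * mu * dotv (x' - m') (x' - m') <= (L - mu) * V' ->
  mu * dotv (x - x') (x - x') <= L * (dotv (m - m') (m - m') + V + V').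
Proof.
move=> mu0 muL V0 V0' near near'.
set e := x - m; set e' := x' - m'.
have -> : x - x' = (m - m') + (e - e').
  by apply/rowP => k; rewrite !mxE; ring.
set a := m - m'; set b := e - e'.
have par : dotv b b <= 2 * dotv e e + 2 * dotv e' e'.
  by have := dotv_sqrD_le 1 1 e (- e'); rewrite dotv_sqrN; lra.
have [Lmu|Lmu] := eqVneq L mu.
  have b0 : b = 0.
    apply: dotv_eq0; apply/eqP; rewrite eq_le dotv_ge0 andbT.
    move: near near'; rewrite Lmu subrr !mul0r => e0 e0'.
    have := dotv_ge0 e; have := dotv_ge0 e'; nra.
  by rewrite b0 addr0 Lmu; nra.
have K0 : 0 < L - mu by rewrite subr_gt0 lt_def Lmu muL.
have young := dotv_sqrD_le mu (L - mu) a b.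
have spread : mu * dotv b b <= (L - mu) * (V + V') by nra.
have L0 : 0 <= L by lra.
have := ler_wpM2l L0 spread; rewrite subrKC in young.
rewrite -(ler_pM2l K0); nra.
Qed.

Theorem lemma1 (R : realType) (d n : nat) (F : 'I_n -> 'rV[R]_d -> R)
    (mu L : R) (xstar : 'I_n -> 'rV[R]_d) :
  (0 < n)%N -> 0 < mu -> mu <= L ->
  (forall i, A1_fun mu L (F i)) ->
  (forall i, is_argmin (F i) (xstar i)) ->
  let r := \big[Num.max/0]_(i < n) \big[Num.max/0]_(j < n)
             norm2 (xstar i - xstar j) in
  forall x x', pareto_opt F x -> pareto_opt F x' ->
    norm2 (x - x') <= Num.sqrt (L / mu) * r.
Proof.
move=> n0 mu0 muL hA hmin r x x' Px Px'.
have L0 : 0 < L := lt_le_trans mu0 muL.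
have hF i := A1_strongly_convex_smooth (hA i).
have [w [ww near]] := pareto_near_wmean L0 hF hmin (Ordinal n0) Px.
have [w' [ww' near']] := pareto_near_wmean L0 hF hmin (Ordinal n0) Px'.
have r0 : 0 <= r by apply: bigmax_ge_id.
have diam i j : dotv (xstar i - xstar j) (xstar i - xstar j) <= r ^+ 2.
  rewrite -(sqr_sqrtr (dotv_ge0 _)) ler_pXn2r ?nnegrE ?sqrtr_ge0 //.
  apply: le_trans (le_bigmax _ _ i).
  exact: le_bigmax _ (fun j => norm2 (xstar i - xstar j)) j.
have key : mu * dotv (x - x') (x - x') <= L * r ^+ 2.
  apply: (le_trans (sqdist_near_centers_le mu0 muL (wsqdist_ge0 _ _ _ ww)
    (wsqdist_ge0 _ _ _ ww') near near')).
  rewrite -wsqdist_cross ?ww.2 ?ww'.2 //; apply: ler_wpM2l; first exact: ltW.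
  by apply: (convex_sum_le ww) => i; apply: (convex_sum_le ww') => j; exact: diam.
rewrite /norm2 -(ger0_norm r0) -sqrtr_sqr -sqrtrM; last by rewrite divr_ge0 // ltW.
by apply: ler_wsqrtr; rewrite mulrAC ler_pdivlMr // mulrC.
Qed.
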